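(* Let $\sigma$ be a finite relational signature and $n\le k$ positive integers. Then $(\mathbb{H}_{n,k},\epsilon^{n,k},\delta^{n,k})$ is a comonad on the category $\mathcal{R}(\sigma)$ of $\sigma$-structures and homomorphisms.
   Context: For $m\in\mathbb{N}$, $[m]=\{1,\dots,m\}$. For a $\sigma$-structure $\mathcal{A}$, $\mathbb{T}_k\mathcal{A}$ is the $\sigma$-structure whose universe is the set of nonempty finite lists over $A\times[k]$; $\epsilon_{\mathcal{A}}(s)$ is the first component of the last pair of $s$; a tuple $(s_1,\dots,s_r)$ is in $R^{\mathbb{T}_k\mathcal{A}}$ iff the $s_i$ are pairwise comparable in the prefix order, $(\epsilon_{\mathcal{A}}(s_1),\dots,\epsilon_{\mathcal{A}}(s_r))\in R^{\mathcal{A}}$, and whenever $s_i$ is a prefix of $s_j$ and $s_i$ ends with a pair $(a,p)$, no prefix of $s_j$ properly extending $s_i$ ends with a pair $(a',p)$ for any $a'\in A$. For a homomorphism $f$, $\mathbb{T}_kf$ applies $f$ to the first component of every pair. $\delta_{\mathcal{A}}:\mathbb{T}_k\mathcal{A}\to\mathbb{T}_k\mathbb{T}_k\mathcal{A}$ sends $[(a_1,p_1),\dots,(a_m,p_m)]$ to $[(s_1,p_1),\dots,(s_m,p_m)]$ where $s_i=[(a_1,p_1),\dots,(a_i,p_i)]$. A list in $(A\times[k])^{*}$ is basic if it has at most $n$ pairs and its pebble indices (second components) are pairwise distinct. The map $S_n$ from lists over $A\times[k]$ to lists of basic lists is defined by: $S_n(s)=[s]$ if $s$ is basic; otherwise $S_n(s)=[a];S_n(t)$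 where $s=a\cdot t$ and $a$ is the longest basic prefix of $s$ (here $\cdot$ is concatenation and $x;\ell$ / $\ell;x$ denote prepending/appending an element). For a list $s$ and $p\in[k]$, write $S_n(s)=t;[s']$ with $s'$ its last block, and set $\alpha_n(s,p)=t;[s']$ if $|s'|=n$ or $p$ occurs as a pebble index in $s'$, and $\alpha_n(s,p)=t$ otherwise. The relation $\approx_n$ on $\mathbb{T}_k\mathcal{A}$ is: $[s;(a,i)]\approx_n[t;(b,j)]$ iff $a=b$ and $\alpha_n(s,i)=\alpha_n(t,j)$. $\mathbb{H}_{n,k}\mathcal{A}=\mathbb{T}_k\mathcal{A}/{\approx_n}$, where a tuple of equivalence classes is in $R$ iff some choice of representatives is in $R^{\mathbb{T}_k\mathcal{A}}$; $q_n:\mathbb{T}_k\mathcal{A}\to\mathbb{H}_{n,k}\mathcal{A}$ is the quotient map, and $\mathbb{H}_{n,k}f$ is the map induced by $\mathbb{T}_kf$ on classes. The counit $\epsilon^{n,k}_{\mathcal{A}}:\mathbb{H}_{n,k}\mathcal{A}\to\mathcal{A}$ is determined by $\epsilon_{\mathcal{A}}=\epsilon^{n,k}_{\mathcal{A}}\circ q_n$, and the comultiplication $\delta^{n,k}_{\mathcal{A}}:\mathbb{H}_{n,k}\mathcal{A}\to\mathbb{H}_{n,k}\mathbb{H}_{n,k}\mathcal{A}$ is determined by $\delta^{n,k}_{\mathcal{A}}\circ q_n=q_n\circ\mathbb{T}_k q_n\circ\delta_{\mathcal{A}}$ (the outer $q_n$ being the quotient map for $\mathbb{H}_{n,k}\mathcal{A}$).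 *)

From Stdlib Require Import ClassicalEpsilon.
From mathcomp Require Import all_boot.

Set Implicit Arguments.
Unset Strict Implicit.
Unset Printing Implicit Defensive.

Section Structures.
Variables (sig : finType) (ar : sig -> nat).

Record struct := Struct {
  carrier :> Type;
  srel : forall r : sig, ('I_(ar r) -> carrier) -> Prop
}.
Arguments srel : clear implicits.
Arguments srel s r t.

Definition is_hom (A B : struct) (f : A -> B) : Prop :=
  forall (r : sig) (t : 'I_(ar r) -> A), srel A r t -> srel B r (f \o t).

End Structures.
Arguments srel {sig ar} s r t.
Arguments is_hom {sig ar} A B f.

(* The pebbling construction T_k.  Pebble indices [k] = {1..k} are         *)
(* represented by 'I_k.  A nonempty list [s ; x] (s followed by the final   *)
(* pair x) is represented by the pair (s, x) : seq (X * 'I_k) * (X * 'I_k). *)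

Section Pebbling.
Variables (k n : nat).

Definition TT (X : Type) : Type := (seq (X * 'I_k) * (X * 'I_k))%type.

Definition tolist (X : Type) (t : TT X) : seq (X * 'I_k) := rcons t.1 t.2.

Definition epsT (X : Type) (t : TT X) : X := t.2.1.

Definition Tmap (X Y : Type) (f : X -> Y) (t : TT X) : TT Y :=
  ([seq (f x.1, x.2) | x <- t.1], (f t.2.1, t.2.2)).

Definition prefix (Z : Type) (s t : seq Z) : Prop := exists u, t = s ++ u.

Section TRel.
Variables (sig : finType) (ar : sig -> nat).

Definition T_rel (A : struct ar) (r : sig) (t : 'I_(ar r) -> TT A) : Prop :=
  (forall i j, prefix (tolist (t i)) (tolist (t j)) \/
               prefix (tolist (t j)) (tolist (t i))) /\
  srel A r (fun i => epsT (t i)) /\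
  (forall i j, prefix (tolist (t i)) (tolist (t j)) ->
     forall u : seq (A * 'I_k),
       prefix (tolist (t i)) u -> prefix u (tolist (t j)) ->
       size (tolist (t i)) < size u ->
       (last (t i).2 u).2 <> (t i).2.2).

Definition Tstruct (A : struct ar) : struct ar := Struct (@T_rel A).
End TRel.
Arguments T_rel {sig ar} A r t.
Arguments Tstruct {sig ar} A.

(* comultiplication delta_A of T_k:
   [(a1,p1),...,(am,pm)] |-> [(s1,p1),...,(sm,pm)], s_i = first i pairs. *)
Definition deltaT (X : Type) (t : TT X) : TT (TT X) :=
  let l := tolist t in
  ([seq ((take i l, nth t.2 l i), (nth t.2 l i).2) | i <- iota 0 (size t.1)],
   (t, t.2.2)).

Definition basic (X : Type) (s : seq (X * 'I_k)) : bool :=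
  (size s <= n) && uniq [seq x.2 | x <- s].

Definition lbp (X : Type) (s : seq (X * 'I_k)) : nat :=
  \max_(m < (size s).+1 | basic (take m s)) m.

(* S_n, defined with fuel; the fuel [size s] is always sufficient when n>0,
   since every non-basic step removes at least one pair. *)
Fixpoint Sfuel (X : Type) (fuel : nat) (s : seq (X * 'I_k)) : seq (seq (X * 'I_k)) :=
  if basic s then [:: s] else
  match fuel with
  | 0 => [:: s]
  | fuel'.+1 => take (lbp s) s :: Sfuel fuel' (drop (lbp s) s)
  end.

Definition Sn (X : Type) (s : seq (X * 'I_k)) : seq (seq (X * 'I_k)) :=
  Sfuel (size s) s.

Definition alpha (X : Type) (s : seq (X * 'I_k)) (p : 'I_k) : seq (seq (X * 'I_k)) :=
  let B := Sn s in
  let s' := last [::] B in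
  if (size s' == n) || (p \in [seq x.2 | x <- s']) then B
  else take (size B).-1 B.

Definition approx (X : Type) (s t : TT X) : Prop :=
  s.2.1 = t.2.1 /\ alpha s.1 s.2.2 = alpha t.1 t.2.2.

Definition HT (X : Type) : Type := {P : TT X -> Prop | exists s, P = approx s}.

Definition q (X : Type) (s : TT X) : HT X :=
  exist (fun P => exists s', P = approx s') (approx s) (ex_intro _ s erefl).

Definition rep (X : Type) (c : HT X) : TT X :=
  proj1_sig (constructive_indefinite_description _ (proj2_sig c)).

Section HStruct.
Variables (sig : finType) (ar : sig -> nat).

Definition H_rel (A : struct ar) (r : sig) (c : 'I_(ar r) -> HT A) : Prop :=
  exists t : 'I_(ar r) -> TT A, (forall i, q (t i) = c i) /\ T_rel A r t.

Definition Hstruct (A : struct ar) : struct ar := Struct (@H_rel A).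
End HStruct.
Arguments Hstruct {sig ar} A.

Definition Hmap (X Y : Type) (f : X -> Y) (c : HT X) : HT Y := q (Tmap f (rep c)).

Definition epsH (X : Type) (c : HT X) : X := epsT (rep c).

Definition deltaH (X : Type) (c : HT X) : HT (HT X) :=
  q (Tmap (@q X) (deltaT (rep c))).

End Pebbling.

Arguments q k n {X} s.
Arguments rep k n {X} c.
Arguments Hmap k n {X Y} f c.
Arguments epsH k n {X} c.
Arguments deltaH k n {X} c.
Arguments Tmap k {X Y} f t.
Arguments deltaT k {X} t.
Arguments epsT k {X} t.
Arguments Hstruct k n {sig ar} A.

(* The ≈_n-class of s is determined by its key: the last element of s together
   with alpha_n.  The blocks of S_n, hence alpha_n(s, p), are a reshaping of a
   prefix of s whose shape depends only on the pebble indices of s, so every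
   relabelling that keeps pebble indices commutes with alpha_n; this makes
   H_{n,k} f well defined.  The i-th entry of delta(s) depends only on the first
   i+1 entries of s, so alpha_n of T_k q_n (delta s) is determined by
   alpha_n(s), which makes delta^{n,k} well defined.  The comonad laws then
   descend from those of T_k along the surjection q_n, and relations are
   preserved because the conditions defining R^{T_k A} only involve the prefix
   order and pebble indices, which T_k f and delta both respect. *)

From Pilot Require Import Defs.
From mathcomp Require Import all_boot.
From Stdlib Require Import FunctionalExtensionality PropExtensionality ProofIrrelevance ClassicalEpsilon.

Set Implicit Arguments.
Unset Strict Implicit.
Unset Printing Implicit Defensive.

Section PrefixOrder.
Variable T : Type.
Implicit Types a b : seq T.

Lemma prefixE a b : Defs.prefix a b <-> take (size a) b = a.
Proof.
split=> [[u ->]|e]; first exact: take_size_cat.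
by exists (drop (size a) b); rewrite -{1}e cat_take_drop.
Qed.

Lemma prefix_size a b : Defs.prefix a b -> size a <= size b.
Proof. by move=> [u ->]; rewrite size_cat leq_addr. Qed.

Lemma comparable_prefix a b :
  Defs.prefix a b \/ Defs.prefix b a -> size a <= size b -> Defs.prefix a b.
Proof.
case=> // -[u ->]; rewrite size_cat -{2}[size b]addn0 leq_add2l leqn0.
by move=> /eqP/size0nil ->; exists [::]; rewrite !cats0.
Qed.

Lemma prefix_map (U : Type) (f : T -> U) a b :
  Defs.prefix a b -> Defs.prefix (map f a) (map f b).
Proof. by move=> [u ->]; exists (map f u); rewrite map_cat. Qed.

End PrefixOrder.

Lemma flatten_take (T : Type) (ss : seq (seq T)) j :
  take (size (flatten (take j ss))) (flatten ss) = flatten (take j ss).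
Proof. by rewrite -{2}(cat_take_drop j ss) flatten_cat take_size_cat. Qed.

Section Pebbles.
Variable k : nat.

Definition pebbles (X : Type) (s : seq (X * 'I_k)) : seq 'I_k := map snd s.

Definition relabel (X Y : Type) (f : X -> Y) (x : X * 'I_k) : Y * 'I_k := (f x.1, x.2).

Lemma size_pebbles (X Y : Type) (a : seq (X * 'I_k)) (b : seq (Y * 'I_k)) :
  pebbles a = pebbles b -> size a = size b.
Proof. by move=> e; rewrite -(size_map snd a) -(size_map snd b) -!/(pebbles _) e. Qed.

Section PebblePreserving.
Variables (n : nat) (X Y : Type) (g : X * 'I_k -> Y * 'I_k).
Hypothesis g_pebble : forall x, (g x).2 = x.2.

Lemma pebbles_map s : pebbles (map g s) = pebbles s.
Proof. by rewrite /pebbles -map_comp; apply: eq_map. Qed.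

Lemma basic_map s : basic n (map g s) = basic n s.
Proof. by rewrite /basic size_map; have := pebbles_map s; rewrite /pebbles => ->. Qed.

Lemma lbp_map s : lbp n (map g s) = lbp n s.
Proof. by rewrite /lbp size_map; apply: eq_bigl => m; rewrite -map_take basic_map. Qed.

Lemma Sfuel_map fuel s : Sfuel n fuel (map g s) = map (map g) (Sfuel n fuel s).
Proof.
elim: fuel s => [|fuel IH] s /=; rewrite basic_map; case: ifP => //= _.
by rewrite lbp_map -map_take -map_drop IH.
Qed.

Lemma alpha_map s p : alpha n (map g s) p = map (map g) (alpha n s p).
Proof.
rewrite /alpha /Sn size_map Sfuel_map size_map (last_map (map g) _ [::]) size_map.
have := pebbles_map (last [::] (Sfuel n (size s) s)); rewrite /pebbles => ->.
by case: ifP => // _; rewrite map_take.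
Qed.

End PebblePreserving.

Lemma pebbles_relabel (X Y : Type) (f : X -> Y) (s : seq (X * 'I_k)) :
  pebbles (map (relabel f) s) = pebbles s.
Proof. exact: pebbles_map. Qed.

Lemma alpha_relabel (n : nat) (X Y : Type) (f : X -> Y) (s : seq (X * 'I_k)) p :
  alpha n (map (relabel f) s) p = map (map (relabel f)) (alpha n s p).
Proof. exact: alpha_map. Qed.

Section Alpha.
Variables (n : nat) (X : Type).
Implicit Types s : seq (X * 'I_k).

Lemma flatten_Sfuel fuel s : flatten (Sfuel n fuel s) = s.
Proof.
elim: fuel s => [|fuel IH] s /=; case: ifP => _ /=; rewrite ?cats0 //.
by rewrite IH cat_take_drop.
Qed.

Lemma flatten_alpha s p : flatten (alpha n s p) = take (sumn (shape (alpha n s p))) s.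
Proof.
have [j ->] : exists j, alpha n s p = take j (Sn n s).
  by rewrite /alpha; case: ifP => _; [exists (size (Sn n s)); rewrite take_size | eexists].
have flatten_Sn : flatten (Sn n s) = s by exact: flatten_Sfuel.
by rewrite -size_flatten -{3}flatten_Sn flatten_take.
Qed.

Lemma alpha_reshape s p (sh := shape (alpha n s p)) :
  alpha n s p = reshape sh (take (sumn sh) s).
Proof. by rewrite -flatten_alpha flattenK. Qed.

Lemma shape_alpha_pebbles (Y : Type) s (t : seq (Y * 'I_k)) p :
  pebbles s = pebbles t -> shape (alpha n s p) = shape (alpha n t p).
Proof.
have shape_forget Z (u : seq (Z * 'I_k)) :
    shape (alpha n u p) = shape (alpha n (map (pair tt) (pebbles u)) p).
  rewrite /pebbles -map_comp -[pair tt \o snd]/(relabel (fun=> tt)) alpha_relabel.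
  by rewrite /shape -map_comp; apply: eq_map => v; rewrite /= size_map.
by move=> e; rewrite [LHS]shape_forget [RHS]shape_forget e.
Qed.

End Alpha.

End Pebbles.

Section PebbleComonad.
Variable k : nat.

Definition prefixT (X : Type) (d : X * 'I_k) (l : seq (X * 'I_k)) (i : nat) : TT k X :=
  (take i l, nth d l i).

Definition deltaL (X : Type) (d : X * 'I_k) (l : seq (X * 'I_k)) : seq (TT k X * 'I_k) :=
  [seq (prefixT d l i, (nth d l i).2) | i <- iota 0 (size l)].

Section DeltaL.
Variables (X : Type) (d : X * 'I_k).
Implicit Types l : seq (X * 'I_k).

Lemma size_deltaL l : size (deltaL d l) = size l.
Proof. by rewrite size_map size_iota. Qed.

Lemma nth_deltaL d' l i : i < size l -> nth d' (deltaL d l) i = (prefixT d l i, (nth d l i).2).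
Proof. by move=> lt_il; rewrite (nth_map 0) ?size_iota // nth_iota. Qed.

Lemma eq_deltaL d' l : deltaL d' l = deltaL d l.
Proof.
apply/eq_in_map => i; rewrite mem_iota => /andP[_ lt_il].
by rewrite /prefixT !(set_nth_default d).
Qed.

Lemma take_deltaL m l : take m (deltaL d l) = deltaL d (take m l).
Proof.
rewrite /deltaL -map_take take_iota size_take_min; apply/eq_in_map => i.
rewrite mem_iota => /andP[_]; rewrite add0n ltn_min => /andP[lt_im _].
by rewrite /prefixT nth_take // take_takel // ltnW.
Qed.

Lemma pebbles_deltaL l : pebbles (deltaL d l) = pebbles l.
Proof. by rewrite /pebbles -map_comp -[in RHS](mkseq_nth d l) -map_comp. Qed.

Lemma prefix_deltaL a b : Defs.prefix a b -> Defs.prefix (deltaL d a) (deltaL d b).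
Proof. by move/prefixE=> e; apply/prefixE; rewrite size_deltaL take_deltaL e. Qed.

End DeltaL.

Lemma TmapE (X Y : Type) (f : X -> Y) (t : TT k X) :
  Tmap k f t = (map (relabel f) t.1, relabel f t.2).
Proof. by []. Qed.

Lemma tolist_Tmap (X Y : Type) (f : X -> Y) (t : TT k X) :
  tolist (Tmap k f t) = map (relabel f) (tolist t).
Proof. by rewrite /tolist map_rcons. Qed.

Lemma deltaT_deltaL (X : Type) (d : X * 'I_k) (s : TT k X) :
  deltaT k s = (deltaL d s.1, (s, s.2.2)).
Proof.
rewrite /deltaT (eq_deltaL s.2); congr pair; apply/eq_in_map => i.
rewrite mem_iota => /andP[_ lt_is].
by rewrite /prefixT /tolist -cats1 takel_cat 1?ltnW // nth_cat lt_is.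
Qed.

Lemma tolist_deltaT (X : Type) (d : X * 'I_k) (s : TT k X) :
  tolist (deltaT k s) = deltaL d (tolist s).
Proof.
case: s => l x; rewrite (eq_deltaL x) /tolist (deltaT_deltaL x) /deltaL size_rcons.
rewrite -addn1 iotaD map_cat cats1 /= add0n /prefixT -[rcons l x]cats1.
rewrite take_size_cat // nth_cat ltnn subnn; congr rcons; apply/eq_in_map => i.
by rewrite mem_iota => /andP[_ lt_il]; rewrite takel_cat 1?ltnW // nth_cat lt_il.
Qed.

Lemma Tmap_id (X : Type) (t : TT k X) : Tmap k id t = t.
Proof.
case: t => s x; rewrite TmapE -[in RHS](map_id s).
by congr pair; [apply: eq_map => -[] | case: x].
Qed.

Lemma Tmap_comp (X Y Z : Type) (f : X -> Y) (g : Y -> Z) (t : TT k X) :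
  Tmap k g (Tmap k f t) = Tmap k (g \o f) t.
Proof. by rewrite !TmapE -map_comp. Qed.

Lemma eq_Tmap (X Y : Type) (f g : X -> Y) : f =1 g -> Tmap k f =1 Tmap k g.
Proof. by move=> e t; rewrite !TmapE /relabel e; congr pair; apply: eq_map => x; rewrite e. Qed.

Lemma deltaL_map (X Y : Type) (f : X -> Y) (d : X * 'I_k) (l : seq (X * 'I_k)) :
  deltaL (relabel f d) (map (relabel f) l) = map (relabel (Tmap k f)) (deltaL d l).
Proof.
rewrite /deltaL size_map -map_comp; apply/eq_in_map => i.
rewrite mem_iota => /andP[_ lt_il].
by rewrite /= /prefixT /relabel TmapE /= -map_take (nth_map d).
Qed.

Lemma deltaT_Tmap (X Y : Type) (f : X -> Y) (s : TT k X) :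
  deltaT k (Tmap k f s) = Tmap k (Tmap k f) (deltaT k s).
Proof. by rewrite (deltaT_deltaL s.2) (deltaT_deltaL (relabel f s.2)) TmapE /= deltaL_map. Qed.

Lemma Tmap_epsT_deltaT (X : Type) (s : TT k X) : Tmap k (epsT k) (deltaT k s) = s.
Proof.
case: s => l x; rewrite (deltaT_deltaL x) TmapE; congr pair; last by case: x.
rewrite /deltaL -map_comp -[in RHS](mkseq_nth x l) /mkseq /=.
by apply: eq_map => i; rewrite /= /relabel /epsT /= -surjective_pairing.
Qed.

Lemma deltaL_deltaL (X : Type) (d : X * 'I_k) (d' : TT k X * 'I_k) (l : seq (X * 'I_k)) :
  deltaL d' (deltaL d l) = map (relabel (deltaT k)) (deltaL d l).
Proof.
rewrite [in RHS]/deltaL {1}/deltaL size_deltaL -map_comp; apply/eq_in_map => i.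
rewrite mem_iota => /andP[_ lt_il].
by rewrite /= /prefixT nth_deltaL // take_deltaL /relabel (deltaT_deltaL d).
Qed.

Lemma deltaT_deltaT (X : Type) (s : TT k X) :
  deltaT k (deltaT k s) = Tmap k (deltaT k) (deltaT k s).
Proof.
have [D1 D2] : (deltaT k s).1 = deltaL s.2 s.1 /\ (deltaT k s).2 = (s, s.2.2).
  by rewrite (deltaT_deltaL s.2).
by rewrite (deltaT_deltaL (s, s.2.2) (deltaT k s)) TmapE D1 D2 deltaL_deltaL.
Qed.

End PebbleComonad.

Section Quotient.
Variables (k n : nat).

Definition key (X : Type) (s : TT k X) : X * seq (seq (X * 'I_k)) :=
  (s.2.1, alpha n s.1 s.2.2).

Lemma approxE (X : Type) (s t : TT k X) : approx n s t <-> key s = key t.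
Proof. by rewrite /key /approx; split=> [[-> ->] | [-> ->]]. Qed.

Lemma eq_q (X : Type) (s t : TT k X) : q k n s = q k n t <-> key s = key t.
Proof.
split=> [e | e].
  by apply/approxE; rewrite -[approx n s]/(sval (q k n s)) e; apply/approxE.
apply: subset_eq_compat; apply: functional_extensionality => u.
by apply: propositional_extensionality; split=> /approxE e'; apply/approxE; congruence.
Qed.

Lemma q_rep (X : Type) (c : HT k n X) : q k n (rep k n c) = c.
Proof.
case: c => P hP; rewrite /rep /=.
case: (constructive_indefinite_description _ _) => s0 e /=.
by apply: subset_eq_compat; rewrite e.
Qed.

Lemma HT_ind (X : Type) (P : HT k n X -> Prop) : (forall s, P (q k n s)) -> forall c, P c.
Proof. by move=> Pq c; rewrite -(q_rep c). Qed.

Lemma key_rep (X : Type) (s : TT k X) : key (rep k n (q k n s)) = key s.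
Proof. by apply/eq_q; rewrite q_rep. Qed.

Lemma key_Tmap (X Y : Type) (f : X -> Y) (s : TT k X) :
  key (Tmap k f s) = (f (key s).1, map (map (relabel f)) (key s).2).
Proof. by rewrite /key TmapE /= alpha_relabel. Qed.

Lemma alpha_deltaL (X : Type) (d : X * 'I_k) (l : seq (X * 'I_k)) p
    (sh := shape (alpha n l p)) :
  alpha n (deltaL d l) p = reshape sh (deltaL d (take (sumn sh) l)).
Proof.
rewrite alpha_reshape (shape_alpha_pebbles n p (pebbles_deltaL d l)).
by rewrite take_deltaL.
Qed.

Lemma key_deltaT (X : Type) (s t : TT k X) : key s = key t ->
  key (Tmap k (q k n) (deltaT k s)) = key (Tmap k (q k n) (deltaT k t)).
Proof.
move=> e; have [_ e_alpha] := e.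
rewrite /key !TmapE (deltaT_deltaL s.2 s) (deltaT_deltaL s.2 t) /=.
rewrite !alpha_relabel !alpha_deltaL -!flatten_alpha e_alpha.
by congr pair; apply/eq_q.
Qed.

Lemma Hmap_q (X Y : Type) (f : X -> Y) (s : TT k X) :
  Hmap k n f (q k n s) = q k n (Tmap k f s).
Proof. by apply/eq_q; rewrite !key_Tmap key_rep. Qed.

Lemma epsH_q (X : Type) (s : TT k X) : epsH k n (q k n s) = epsT k s.
Proof. exact: (congr1 fst (key_rep s)). Qed.

Lemma deltaH_q (X : Type) (s : TT k X) :
  deltaH k n (q k n s) = q k n (Tmap k (q k n) (deltaT k s)).
Proof. by apply/eq_q; apply: key_deltaT; apply: key_rep. Qed.

End Quotient.

Section Relations.
Variables (k : nat) (sig : finType) (ar : sig -> nat).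

Definition pebble_not_reused (X : Type) (x0 : X * 'I_k) (p : 'I_k) (a b : seq (X * 'I_k)) :=
  forall u, Defs.prefix a u -> Defs.prefix u b -> size a < size u -> (last x0 u).2 <> p.

Lemma last_pebbles (X Y : Type) (x0 : X * 'I_k) (y0 : Y * 'I_k) a b :
  pebbles a = pebbles b -> 0 < size a -> (last x0 a).2 = (last y0 b).2.
Proof.
rewrite /pebbles; case: a => [|x a] //; case: b => [|y b] // e _.
by rewrite -!(last_map snd) /=; case: e => -> ->.
Qed.

Lemma pebble_not_reused_pebbles (X Y : Type) (x0 : X * 'I_k) (y0 : Y * 'I_k) p a b a' b' :
  pebbles a = pebbles a' -> pebbles b = pebbles b' -> Defs.prefix a b ->
  pebble_not_reused x0 p a b -> pebble_not_reused y0 p a' b'.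
Proof.
move=> ea eb /prefixE ab not_reused u' _ /prefixE u'b' lt_au'.
have le_u'b : size u' <= size b by rewrite (size_pebbles eb) -u'b' size_take_min geq_minr.
have size_a := size_pebbles ea.
have e_u' : pebbles (take (size u') b) = pebbles u'.
  by rewrite -[in RHS]u'b' /pebbles !map_take -/(pebbles b) -/(pebbles b') eb.
have size_u : size (take (size u') b) = size u' := size_takel le_u'b.
rewrite -(last_pebbles x0 _ e_u'); last by rewrite size_u (leq_ltn_trans (leq0n _) lt_au').
apply: not_reused; last by rewrite size_u size_a.
- by apply/prefixE; rewrite take_takel ?ab // size_a ltnW.
- by apply/prefixE; rewrite size_u.
Qed.

Lemma T_rel_transfer (A B : struct ar) (r : sig)
    (t : 'I_(ar r) -> TT k A) (t' : 'I_(ar r) -> TT k B) :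
  (forall i, pebbles (tolist (t' i)) = pebbles (tolist (t i))) ->
  (forall i j, Defs.prefix (tolist (t i)) (tolist (t j)) ->
               Defs.prefix (tolist (t' i)) (tolist (t' j))) ->
  T_rel t -> srel B r (fun i => epsT k (t' i)) -> T_rel t'.
Proof.
move=> peb pre [cmp [_ fresh]] rel'; split; [|split] => //.
  by move=> i j; case: (cmp i j) => ?; [left | right]; apply: pre.
move=> i j p'ij.
have pij : Defs.prefix (tolist (t i)) (tolist (t j)).
  by apply: comparable_prefix (cmp i j) _; rewrite -!(size_pebbles (peb _)) prefix_size.
have <- : (t i).2.2 = (t' i).2.2.
  have := @last_pebbles _ _ (t i).2 (t' i).2 _ _ (esym (peb i)).
  by rewrite /tolist !last_rcons size_rcons => ->.
exact: pebble_not_reused_pebbles (esym (peb i)) (esym (peb j)) pij (fresh i j pij).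
Qed.

End Relations.

Section HComonad.
Variables (k n : nat).

Lemma Hmap_id (X : Type) : Hmap k n (@id X) = id.
Proof. by apply: functional_extensionality; apply: HT_ind => s; rewrite Hmap_q Tmap_id. Qed.

Lemma Hmap_comp (X Y Z : Type) (f : X -> Y) (g : Y -> Z) :
  Hmap k n (g \o f) = Hmap k n g \o Hmap k n f.
Proof. by apply: functional_extensionality; apply: HT_ind => s; rewrite /= !Hmap_q Tmap_comp. Qed.

Lemma epsH_natural (X Y : Type) (f : X -> Y) : f \o epsH k n = epsH k n \o Hmap k n f.
Proof. by apply: functional_extensionality; apply: HT_ind => s; rewrite /= Hmap_q !epsH_q. Qed.

Lemma deltaH_natural (X Y : Type) (f : X -> Y) :
  Hmap k n (Hmap k n f) \o deltaH k n = deltaH k n \o Hmap k n f.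
Proof.
apply: functional_extensionality; apply: HT_ind => s.
rewrite /= deltaH_q !Hmap_q deltaH_q deltaT_Tmap !Tmap_comp.
by congr (q k n _); apply: eq_Tmap => x; rewrite /= Hmap_q.
Qed.

Lemma epsH_deltaH (X : Type) : epsH k n \o deltaH k n = @id (HT k n X).
Proof.
apply: functional_extensionality; apply: HT_ind => s.
by rewrite /= deltaH_q epsH_q.
Qed.

Lemma Hmap_epsH_deltaH (X : Type) : Hmap k n (epsH k n) \o deltaH k n = @id (HT k n X).
Proof.
apply: functional_extensionality; apply: HT_ind => s.
rewrite /= deltaH_q Hmap_q Tmap_comp (@eq_Tmap _ _ _ _ (epsT k)) ?Tmap_epsT_deltaT //.
by move=> x; rewrite /= epsH_q.
Qed.

Lemma deltaH_deltaH (X : Type) :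
  deltaH k n \o deltaH k n = Hmap k n (deltaH k n) \o deltaH k n :> (HT k n X -> _).
Proof.
apply: functional_extensionality; apply: HT_ind => s.
rewrite /= !deltaH_q Hmap_q deltaT_Tmap !Tmap_comp.
rewrite (@eq_Tmap _ _ _ (deltaH k n \o q k n) (q k n \o Tmap k (q k n) \o deltaT k)).
  by rewrite -(@Tmap_comp _ _ _ _ (deltaT k)) -deltaT_deltaT.
by move=> x; rewrite /= deltaH_q.
Qed.

Variables (sig : finType) (ar : sig -> nat).

Lemma Hmap_is_hom (A B : struct ar) (f : A -> B) :
  is_hom A B f -> is_hom (Hstruct k n A) (Hstruct k n B) (Hmap k n f).
Proof.
move=> hom_f r c [t [qt rel_t]]; exists (fun i => Tmap k f (t i)); split.
  by move=> i; rewrite /= -qt Hmap_q.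
apply: (T_rel_transfer _ _ rel_t); last exact: hom_f rel_t.2.1.
- by move=> i; rewrite tolist_Tmap pebbles_relabel.
- by move=> i j; rewrite !tolist_Tmap; apply: prefix_map.
Qed.

Lemma epsH_is_hom (A : struct ar) : is_hom (Hstruct k n A) A (epsH k n).
Proof.
move=> r c [t [qt rel_t]].
have -> : epsH k n \o c = fun i => epsT k (t i).
  by apply: functional_extensionality => i; rewrite /= -qt epsH_q.
exact: rel_t.2.1.
Qed.

Lemma deltaH_is_hom (A : struct ar) :
  is_hom (Hstruct k n A) (Hstruct k n (Hstruct k n A)) (deltaH k n).
Proof.
move=> r c [t [qt rel_t]]; exists (fun i => Tmap k (q k n) (deltaT k (t i))); split.
  by move=> i; rewrite /= -qt deltaH_q.
apply: (T_rel_transfer _ _ rel_t); last by exists t.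
- by move=> i; rewrite tolist_Tmap pebbles_relabel (tolist_deltaT (t i).2) pebbles_deltaL.
- move=> i j; rewrite !tolist_Tmap !(tolist_deltaT (t i).2).
  by move/(prefix_deltaL (t i).2); apply: prefix_map.
Qed.

End HComonad.

Theorem theorem3p12 (sig : finType) (ar : sig -> nat) (n k : nat)
  (n_pos : 0 < n) (n_le_k : n <= k) :
  let H := Hstruct k n (sig:=sig) (ar:=ar) in
  (* the operations are well defined: they are determined by the defining
     equations on representatives *)
  (forall (A B : struct ar) (f : A -> B) (s : TT k A),
      is_hom A B f -> Hmap k n f (q k n s) = q k n (Tmap k f s)) /\
  (forall (A : struct ar) (s : TT k A), epsH k n (q k n s) = epsT k s) /\
  (forall (A : struct ar) (s : TT k A),
      deltaH k n (q k n s) = q k n (Tmap k (q k n) (deltaT k s))) /\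
  (* H_{n,k} is an endofunctor of R(sigma) *)
  (forall (A B : struct ar) (f : A -> B),
      is_hom A B f -> is_hom (H A) (H B) (Hmap k n f)) /\
  (forall A : struct ar, Hmap k n (@id A) = @id (H A)) /\
  (forall (A B C : struct ar) (f : A -> B) (g : B -> C),
      is_hom A B f -> is_hom B C g ->
      Hmap k n (g \o f) = Hmap k n g \o Hmap k n f) /\
  (* counit and comultiplication are homomorphisms *)
  (forall A : struct ar, is_hom (H A) A (epsH k n)) /\
  (forall A : struct ar, is_hom (H A) (H (H A)) (deltaH k n)) /\
  (* naturality *)
  (forall (A B : struct ar) (f : A -> B),
      is_hom A B f -> f \o epsH k n = epsH k n \o Hmap k n f) /\
  (forall (A B : struct ar) (f : A -> B),
      is_hom A B f ->
      Hmap k n (Hmap k n f) \o deltaH k n = deltaH k n \o Hmap k n f) /\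
  (* comonad laws *)
  (forall A : struct ar,
      epsH k n \o deltaH k n = @id (H A)) /\
  (forall A : struct ar,
      Hmap k n (epsH k n) \o deltaH k n = @id (H A)) /\
  (forall A : struct ar,
      deltaH k n \o deltaH k n = Hmap k n (deltaH k n) \o deltaH k n :> (H A -> H (H (H A)))).
Proof.
move=> H.
split; first by move=> A B f s _; exact: Hmap_q.
split; first by move=> A s; exact: epsH_q.
split; first by move=> A s; exact: deltaH_q.
split; first exact: Hmap_is_hom.
split; first by move=> A; exact: Hmap_id.
split; first by move=> A B C f g _ _; exact: Hmap_comp.
split; first exact: epsH_is_hom.
split; first exact: deltaH_is_hom.
split; first by move=> A B f _; exact: epsH_natural.
split; first by move=> A B f _; exact: deltaH_natural.
split; first by move=> A; exact: epsH_deltaH.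
split; first by move=> A; exact: Hmap_epsH_deltaH.
by move=> A; exact: deltaH_deltaH.
Qed.
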